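(* Let $X$ be a set and let $T:\mathcal P(X)\to\mathcal P(X)$ be an order reversing quasi involution. Then there exists a symmetric function $c:X\times X\to\{-1,1\}$ (i.e. $c(x,y)=c(y,x)$ for all $x,y\in X$) such that for every $K\subseteq X$, \[ TK=K^c:=\{y\in X:\ \inf_{x\in K}c(x,y)\ge 0\}. \]
   Context: $\mathcal P(X)$ denotes the power set of $X$. A map $T:\mathcal P(X)\to\mathcal P(X)$ is an order reversing quasi involution if for all $K,L\subseteq X$: (i) $K\subseteq TTK$, and (ii) $L\subseteq K$ implies $TK\subseteq TL$. The infimum over the empty set is $+\infty$, so $\emptyset^c=X$. *)

From Stdlib Require Import ZArith.
Open Scope Z_scope.

Definition subset {X : Type} (K L : X -> Prop) : Prop := forall x, K x -> L x.
Definition set_eq {X : Type} (K L : X -> Prop) : Prop := forall x, K x <-> L x.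

Definition order_reversing_quasi_involution {X : Type}
  (T : (X -> Prop) -> (X -> Prop)) : Prop :=
  (forall K, subset K (T (T K))) /\
  (forall K L, subset L K -> subset (T K) (T L)).

(* K^c = { y | inf_{x in K} c(x,y) >= 0 }; since c takes values in a finite
   set the infimum is attained (or is +oo for K empty), so this is
   { y | forall x in K, c x y >= 0 }. *)
Definition cost_polar {X : Type} (c : X -> X -> Z) (K : X -> Prop) : X -> Prop :=
  fun y => forall x, K x -> 0 <= c x y.

(** The cost is read off the images of singletons ([eq x] is {x}): c(x,y) = 1 iff y ∈ T{x}.
    Antitonicity and K ⊆ TTK make this relation symmetric, and they also give
    TK = ⋂_{x ∈ K} T{x}: if y ∈ T{x} for every x ∈ K, then by symmetry
    K ⊆ T{y}, hence y ∈ TT{y} ⊆ TK. *)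

From Stdlib Require Import ZArith.
From Stdlib Require Import ClassicalEpsilon Lia.
Open Scope Z_scope.

Definition sign_of (P : Prop) : Z :=
  if excluded_middle_informative P then 1 else -1.

Lemma sign_of_pm1 (P : Prop) : sign_of P = -1 \/ sign_of P = 1.
Proof. unfold sign_of; destruct excluded_middle_informative; auto. Qed.

Lemma sign_of_nonneg (P : Prop) : 0 <= sign_of P <-> P.
Proof. unfold sign_of; destruct excluded_middle_informative; split; tauto || lia. Qed.

Lemma sign_of_iff (P Q : Prop) : (P <-> Q) -> sign_of P = sign_of Q.
Proof.
  intros HPQ; unfold sign_of.
  do 2 destruct excluded_middle_informative; tauto.
Qed.

Lemma cost_polar_sign_of {X : Type} (R : X -> X -> Prop) (K : X -> Prop) :
  set_eq (cost_polar (fun x y => sign_of (R x y)) K) (fun y => forall x, K x -> R x y).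
Proof.
  intros y; unfold cost_polar; split; intros H x Hx; apply sign_of_nonneg; auto.
Qed.

Section QuasiInvolution.

Variables (X : Type) (T : (X -> Prop) -> (X -> Prop)).
Hypothesis T_ext : forall K, subset K (T (T K)).
Hypothesis T_anti : forall K L, subset L K -> subset (T K) (T L).

Lemma T_single_sym (x y : X) : T (eq x) y -> T (eq y) x.
Proof.
  intros Hy.
  apply (T_anti (T (eq x)) (eq y)); [intros z <-; exact Hy |].
  apply T_ext; reflexivity.
Qed.

Lemma T_sub_T_single (K : X -> Prop) (x : X) : K x -> subset (T K) (T (eq x)).
Proof. intros Hx; apply T_anti; intros z <-; exact Hx. Qed.

Lemma T_eq_bigcap_single (K : X -> Prop) :
  set_eq (T K) (fun y => forall x, K x -> T (eq x) y).
Proof.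
  intros y; split.
  - intros Hy x Hx; exact (T_sub_T_single K x Hx y Hy).
  - intros Hy.
    assert (K_sub : subset K (T (eq y))) by (intros x Hx; apply T_single_sym, Hy, Hx).
    apply (T_anti _ _ K_sub), T_ext; reflexivity.
Qed.

End QuasiInvolution.

Theorem theorem1p3 (X : Type) (T : (X -> Prop) -> (X -> Prop))
  (HT : order_reversing_quasi_involution T) :
  exists c : X -> X -> Z,
    (forall x y, c x y = -1 \/ c x y = 1) /\
    (forall x y, c x y = c y x) /\
    (forall K : X -> Prop, set_eq (T K) (cost_polar c K)).
Proof.
  destruct HT as [T_ext T_anti].
  exists (fun x y => sign_of (T (eq x) y)).
  split; [| split].
  - intros x y; apply sign_of_pm1.
  - intros x y; apply sign_of_iff; split; apply T_single_sym; assumption.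
  - intros K y.
    rewrite (T_eq_bigcap_single X T T_ext T_anti K y), (cost_polar_sign_of _ K y).
    reflexivity.
Qed.
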